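(* Let $\mathcal{P}$ be a partition of $\{1,\dots,n\}$ and $\mathcal{U}$ a subspace of $\mathbb{R}^n$. If $\mathcal{U}$ is $\mathcal{P}$-realizable then every element of $\mathcal{U}$ is $\mathcal{P}$-balanced. If $\mathcal{U}=\operatorname{span}\{u\}$ is one-dimensional, then $\mathcal{U}$ is $\mathcal{P}$-realizable if and only if $u$ is $\mathcal{P}$-balanced.
   Context: For $u\in\mathbb{R}^n$ and $\mathcal{I}\subseteq\{1,\dots,n\}$, $u_{\mathcal{I}}$ is the subvector of $u$ indexed by $\mathcal{I}$. $u$ is $\mathcal{P}$-balanced if $\|u_{\mathcal{I}}\|_2\le\sum_{\mathcal{J}\in\mathcal{P}\setminus\{\mathcal{I}\}}\|u_{\mathcal{J}}\|_2$ for all $\mathcal{I}\in\mathcal{P}$. $\mathcal{E}_{\mathcal{P}}=\{Y\succeq0: Y_{\mathcal{I}}=I\text{ for all }\mathcal{I}\in\mathcal{P}\}$; $\mathcal{U}$ is $\mathcal{P}$-realizable if some $Y\in\mathcal{E}_{\mathcal{P}}$ has nullspace containing $\mathcal{U}$. *)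

From HB Require Import structures.
From mathcomp Require Import all_boot all_order all_algebra.
From mathcomp Require Import reals.
Set Implicit Arguments. Unset Strict Implicit. Unset Printing Implicit Defensive.
Import Order.TTheory GRing.Theory Num.Theory.
Local Open Scope ring_scope.

Definition subnorm (R : realType) (n : nat) (u : 'rV[R]_n) (I : {set 'I_n}) : R :=
  Num.sqrt (\sum_(i in I) u 0 i ^+ 2).

Definition balanced (R : realType) (n : nat) (P : {set {set 'I_n}}) (u : 'rV[R]_n) : Prop :=
  forall I, I \in P -> subnorm u I <= \sum_(J in P | J != I) subnorm u J.

Definition psd (R : realType) (n : nat) (Y : 'M[R]_n) : Prop :=
  Y^T = Y /\ forall x : 'cV[R]_n, 0 <= (x^T *m Y *m x) 0 0.

Definition in_EP (R : realType) (n : nat) (P : {set {set 'I_n}}) (Y : 'M[R]_n) : Prop :=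
  psd Y /\ forall I, I \in P -> forall i j, i \in I -> j \in I -> Y i j = (i == j)%:R.

(* The subspace U (= row space of the matrix U) is P-realizable:
   some Y in E_P has nullspace containing U. *)
Definition realizable (R : realType) (n m : nat) (P : {set {set 'I_n}}) (U : 'M[R]_(m, n)) : Prop :=
  exists Y : 'M[R]_n, in_EP P Y /\ forall u : 'rV[R]_n, (u <= U)%MS -> Y *m u^T = 0.

From HB Require Import structures.
From mathcomp Require Import all_boot all_order all_algebra.
From mathcomp Require Import reals.
From mathcomp Require Import ring lra zify.
Import Order.TTheory GRing.Theory Num.Theory.
Local Open Scope ring_scope.
Set Implicit Arguments. Unset Strict Implicit.

(* If [Y] in E_P kills [u], the [I]-th block of [Y u = 0], paired with [u_I],
   gives [|u_I|^2 = - sum_(J != I) u_I^T Y_IJ u_J], and every cross term is at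
   least [- |u_I| |u_J|] since [Y] is psd on the plane spanned by [(u_I, 0)]
   and [(0, u_J)].  Conversely, balanced block norms are the side lengths of a
   closed polygon in the plane, with unit edge directions [w_K].  With [e] the
   blockwise normalization of [u], the matrix [Y = 1 + D (W - B) D] satisfies
   [x^T Y x = |x|^2 - sum_K <e_K, x_K>^2 + |sum_K <e_K, x_K> w_K|^2 >= 0]
   (Cauchy-Schwarz on each block), and [Y u = 0] because the polygon closes. *)

Section PartitionBlocks.
Variables (n : nat) (P : {set {set 'I_n}}).
Hypothesis partP : partition P [set: 'I_n].

Lemma sum_pblocks (V : nmodType) (F : 'I_n -> V) :
  \sum_i F i = \sum_(K in P) \sum_(i in K) F i.
Proof.
case/and3P: partP => /eqP covP tiP _; rewrite -big_trivIset // covP.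
by apply: eq_bigl => i; rewrite inE.
Qed.

Lemma mem_pblock_self i : i \in pblock P i.
Proof. by case/and3P: partP => /eqP covP _ _; rewrite mem_pblock covP inE. Qed.

Lemma pblock_in_partition i : pblock P i \in P.
Proof. by case/and3P: partP => /eqP covP _ _; rewrite pblock_mem // covP inE. Qed.

Lemma pblock_of_mem K i : K \in P -> i \in K -> pblock P i = K.
Proof. by case/and3P: partP => _ tiP _; apply: def_pblock. Qed.

Lemma eq_pblock_mem K i : K \in P -> (pblock P i == K) = (i \in K).
Proof.
move=> KP; apply/eqP/idP => [<-|iK]; first exact: mem_pblock_self.
exact: pblock_of_mem.
Qed.

Lemma sum_same_pblock (R : pzSemiRingType) i (F : 'I_n -> R) :
  \sum_j (pblock P i == pblock P j)%:R * F j = \sum_(j in pblock P i) F j.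
Proof.
rewrite [RHS]big_mkcond; apply: eq_bigr => j _.
rewrite eq_sym eq_pblock_mem ?pblock_in_partition //.
by case: (j \in pblock P i); rewrite ?mul1r ?mul0r.
Qed.

End PartitionBlocks.

Section SubNorm.
Variables (R : realType) (n : nat) (u : 'rV[R]_n).

Lemma subnorm_ge0 I : 0 <= subnorm u I.
Proof. exact: sqrtr_ge0. Qed.

Lemma subnorm_sqr I : subnorm u I ^+ 2 = \sum_(i in I) u 0 i ^+ 2.
Proof. by rewrite sqr_sqrtr // sumr_ge0 // => i _; rewrite sqr_ge0. Qed.

Lemma subnorm_eq0 I i : subnorm u I = 0 -> i \in I -> u 0 i = 0.
Proof.
move=> /(congr1 (fun x => x ^+ 2)); rewrite subnorm_sqr expr0n /= => sum0 iI.
apply/eqP; rewrite -sqrf_eq0; apply/eqP.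
by apply: (psumr_eq0P _ sum0) => // k _; rewrite sqr_ge0.
Qed.

End SubNorm.

Lemma mxform_sum (R : comPzRingType) n (Y : 'M[R]_n) (x : 'cV[R]_n) :
  (x^T *m Y *m x) 0 0 = \sum_i \sum_j x i 0 * Y i j * x j 0.
Proof.
rewrite !mxE; under eq_bigr do rewrite !mxE.
under eq_bigr do under eq_bigr do rewrite !mxE.
by rewrite exchange_big /=; under eq_bigr do rewrite mulr_suml.
Qed.

Lemma psd_sum_ge0 (R : realType) n (Y : 'M[R]_n) (f : 'I_n -> R) :
  psd Y -> 0 <= \sum_i \sum_j f i * Y i j * f j.
Proof.
case=> _ /(_ (\col_i f i)); rewrite mxform_sum.
by under eq_bigr do under eq_bigr do rewrite !mxE.
Qed.

Lemma sum_mem_indicator (R : pzSemiRingType) n (I J : {set 'I_n})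
    (g : 'I_n -> 'I_n -> R) :
  \sum_i \sum_j (i \in I)%:R * (j \in J)%:R * g i j =
  \sum_(i in I) \sum_(j in J) g i j.
Proof.
rewrite [RHS]big_mkcond; apply: eq_bigr => i _.
case: (i \in I); last by rewrite big1 // => j _; rewrite !mul0r.
rewrite [RHS]big_mkcond; apply: eq_bigr => j _.
by case: (j \in J); rewrite /= ?mul1r ?mul0r.
Qed.

Definition bform (R : realType) n (Y : 'M[R]_n) (u : 'rV[R]_n) (I J : {set 'I_n}) :=
  \sum_(i in I) \sum_(j in J) u 0 i * Y i j * u 0 j.

Section BlockForm.
Variables (R : realType) (n : nat) (P : {set {set 'I_n}}) (Y : 'M[R]_n).
Variable u : 'rV[R]_n.
Hypothesis Y_EP : in_EP P Y.
Hypothesis partP : partition P [set: 'I_n].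

Lemma bform_diag I : I \in P -> bform Y u I I = subnorm u I ^+ 2.
Proof.
case: Y_EP => _ Y_id IP; rewrite subnorm_sqr; apply: eq_bigr => i iI.
rewrite (bigD1 i) //= (Y_id I) // eqxx mulr1 big1 ?addr0 ?expr2 // => j /andP[jI ji].
by rewrite (Y_id I) // eq_sym (negbTE ji) mulr0 mul0r.
Qed.

Lemma bform_sym I J : bform Y u J I = bform Y u I J.
Proof.
case: Y_EP => -[YT _] _; rewrite /bform exchange_big /=.
apply: eq_bigr => i _; apply: eq_bigr => j _.
by rewrite -[in LHS]YT mxE mulrC [u 0 j * _]mulrC mulrA.
Qed.

Lemma bform_pair_ge0 a b I J :
  0 <= a ^+ 2 * bform Y u I I + 2 * a * b * bform Y u I J + b ^+ 2 * bform Y u J J.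
Proof.
pose f i := (a * (i \in I)%:R + b * (i \in J)%:R) * u 0 i.
pose g i j := u 0 i * Y i j * u 0 j.
have := psd_sum_ge0 f (proj1 Y_EP).
have -> : \sum_i \sum_j f i * Y i j * f j =
   a ^+ 2 * (\sum_i \sum_j (i \in I)%:R * (j \in I)%:R * g i j) +
   a * b * (\sum_i \sum_j (i \in I)%:R * (j \in J)%:R * g i j) +
   a * b * (\sum_i \sum_j (i \in J)%:R * (j \in I)%:R * g i j) +
   b ^+ 2 * (\sum_i \sum_j (i \in J)%:R * (j \in J)%:R * g i j).
  rewrite !mulr_sumr -!big_split /=; apply: eq_bigr => i _.
  rewrite !mulr_sumr -!big_split /=; apply: eq_bigr => j _.
  rewrite /f /g; ring.
by rewrite !sum_mem_indicator -!/(bform Y u _ _) (bform_sym I J); lra.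
Qed.

Lemma bform_ge I J : I \in P -> J \in P ->
  - (subnorm u I * subnorm u J) <= bform Y u I J.
Proof.
move=> IP JP; set a := subnorm u I; set b := subnorm u J.
have [a0|a_neq0] := eqVneq a 0.
  rewrite a0 mul0r oppr0 /bform big1 // => i iI.
  by rewrite big1 // => j _; rewrite (subnorm_eq0 a0 iI) !mul0r.
have [b0|b_neq0] := eqVneq b 0.
  rewrite b0 mulr0 oppr0 /bform big1 // => i _.
  by rewrite big1 // => j jJ; rewrite (subnorm_eq0 b0 jJ) mulr0.
have ab_gt0 : 0 < a * b.
  by apply: mulr_gt0; rewrite lt_def subnorm_ge0 andbT ?a_neq0 ?b_neq0.
have := bform_pair_ge0 b a I J.
rewrite (bform_diag IP) (bform_diag JP) -/a -/b => pair_ge0.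
have : 0 <= 2 * (a * b) * (a * b + bform Y u I J) by lra.
by rewrite pmulr_rge0 => [?|]; [lra | apply: mulr_gt0].
Qed.

Lemma bform_row_sum I : Y *m u^T = 0 -> \sum_(K in P) bform Y u I K = 0.
Proof.
move=> Yu0; rewrite /bform exchange_big /=; apply: big1 => i _.
have rowi0 : \sum_j Y i j * u 0 j = 0.
  by move/matrixP/(_ i 0): Yu0; rewrite !mxE; under eq_bigr do rewrite mxE.
rewrite -(sum_pblocks partP (fun j => u 0 i * Y i j * u 0 j)).
under eq_bigr do rewrite -mulrA.
by rewrite -mulr_sumr rowi0 mulr0.
Qed.

Lemma null_in_EP_balanced : Y *m u^T = 0 -> balanced P u.
Proof.
move=> Yu0 I IP; have := bform_row_sum I Yu0.
rewrite (bigD1 I) //= (bform_diag IP) => /eqP; rewrite addr_eq0 => /eqP sqr_eq.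
have cross_le : subnorm u I ^+ 2 <=
    subnorm u I * \sum_(J in P | J != I) subnorm u J.
  rewrite sqr_eq -sumrN mulr_sumr; apply: ler_sum => J /andP[JP _].
  by rewrite lerNl; apply: bform_ge.
have [->|I_neq0] := eqVneq (subnorm u I) 0.
  by rewrite sumr_ge0 // => J _; apply: subnorm_ge0.
by rewrite expr2 ler_pM2l // lt_def I_neq0 subnorm_ge0 in cross_le.
Qed.

End BlockForm.

Section PlaneClosure.
Variable R : realType.

Lemma unit_direction (a p1 p2 : R) :
  0 <= a -> p1 ^+ 2 + p2 ^+ 2 = a ^+ 2 ->
  exists v : R * R, [/\ v.1 ^+ 2 + v.2 ^+ 2 = 1, a * v.1 = p1 & a * v.2 = p2].
Proof.
move=> a_ge0 norm_p; have [a0|a_neq0] := eqVneq a 0.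
  move: norm_p; rewrite a0 expr0n /= => /eqP; rewrite paddr_eq0 ?sqr_ge0 //.
  rewrite !sqrf_eq0 => /andP[/eqP -> /eqP ->].
  by exists (1, 0); split => /=; ring.
exists (p1 / a, p2 / a); split => /=; last 2 first.
- by rewrite mulrC divfK.
- by rewrite mulrC divfK.
by rewrite !expr_div_n -mulrDl norm_p divff // expf_neq0.
Qed.

Lemma triangle_closure (A B C : R) :
  0 <= A -> 0 < B -> 0 <= C -> A <= B + C -> B <= A + C -> C <= A + B ->
  exists v1 v2 v3 : R * R,
    [/\ v1.1 ^+ 2 + v1.2 ^+ 2 = 1, v2.1 ^+ 2 + v2.2 ^+ 2 = 1,
        v3.1 ^+ 2 + v3.2 ^+ 2 = 1,
        A * v1.1 + B * v2.1 + C * v3.1 = 0 & A * v1.2 + B * v2.2 + C * v3.2 = 0].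
Proof.
move=> A_ge0 B_gt0 C_ge0 hA hB hC.
(* The apex [(x, y)] of the triangle with base [(0,0)--(-B,0)] and sides [A], [C]. *)
set x := (C ^+ 2 - A ^+ 2 - B ^+ 2) / (2 * B).
have C2_lo : (A - B) ^+ 2 <= C ^+ 2 by nra.
have C2_hi : C ^+ 2 <= (A + B) ^+ 2 by nra.
have x2_le : x ^+ 2 <= A ^+ 2.
  rewrite /x expr_div_n ler_pdivrMr ?exprn_gt0 ?mulr_gt0 //; nra.
set y := Num.sqrt (A ^+ 2 - x ^+ 2).
have y2 : y ^+ 2 = A ^+ 2 - x ^+ 2 by rewrite sqr_sqrtr // subr_ge0.
have [v1 [v1_unit v1x v1y]] : exists v1 : R * R,
    [/\ v1.1 ^+ 2 + v1.2 ^+ 2 = 1, A * v1.1 = x & A * v1.2 = y].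
  by apply: unit_direction; rewrite // y2; ring.
have [v3 [v3_unit v3x v3y]] : exists v3 : R * R,
    [/\ v3.1 ^+ 2 + v3.2 ^+ 2 = 1, C * v3.1 = - (x + B) & C * v3.2 = - y].
  apply: unit_direction; rewrite // !sqrrN y2 /x.
  by field; rewrite gt_eqF.
exists v1, (1, 0), v3; split => //=; last by rewrite v1y v3y; ring.
  by ring.
by rewrite v1x v3x; ring.
Qed.
End PlaneClosure.

Section PolygonClosure.
Variables (R : realType) (T : finType) (P : {set T}) (r : T -> R).

Lemma greedy_half_split : 0 < \sum_(K in P) r K ->
  exists (S : {set T}) (K0 : T), [/\ S \subset P, K0 \in P, K0 \notin S,
    2 * \sum_(K in S) r K <= \sum_(K in P) r K &
    \sum_(K in P) r K < 2 * (r K0 + \sum_(K in S) r K)].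
Proof.
set total := \sum_(K in P) r K => total_gt0.
pose half_sub := fun S : {set T} => (S \subset P) && (2 * \sum_(K in S) r K <= total).
have half_sub0 : half_sub set0 by rewrite /half_sub sub0set big_set0 mulr0 ltW.
have [S /andP[SP S_half] S_max] := arg_maxnP (fun S : {set T} => #|S|) half_sub0.
have /subsetPn[K0 K0P K0S] : ~~ (P \subset S).
  apply: contraL S_half => PS; rewrite -ltNge.
  have -> : S = P by apply/eqP; rewrite eqEsubset SP PS.
  by rewrite -/total; lra.
exists S, K0; split => //; rewrite ltNge -big_setU1 //=; apply/negP => half.
have /S_max : half_sub (K0 |: S) by rewrite /half_sub half subUset sub1set K0P SP.
by rewrite cardsU1 K0S; lia.
Qed.

Lemma sum_split_subset_point (F : T -> R) (S : {set T}) K0 :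
  S \subset P -> K0 \in P -> K0 \notin S ->
  \sum_(K in P) F K = \sum_(K in S) F K + F K0 +
     \sum_(K in P | (K \notin S) && (K != K0)) F K.
Proof.
move=> SP K0P K0S.
rewrite (bigID (mem S)) /= -addrA; congr (_ + _).
  by apply: eq_bigl => K; apply/andb_idl => /(subsetP SP).
by rewrite (bigD1 K0) /= ?K0P ?K0S //; congr (_ + _); apply: eq_bigl => K; rewrite andbA.
Qed.

(* Group the sides into three, none longer than half the perimeter, and close
   a triangle. *)
Lemma polygon_closure :
  (forall K, 0 <= r K) ->
  (forall K, K \in P -> r K <= \sum_(J in P | J != K) r J) ->
  exists w : T -> R * R, [/\ forall K, (w K).1 ^+ 2 + (w K).2 ^+ 2 = 1,
    \sum_(K in P) r K * (w K).1 = 0 & \sum_(K in P) r K * (w K).2 = 0].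
Proof.
move=> r_ge0 r_bal.
have [total0|total_neq0] := eqVneq (\sum_(K in P) r K) 0.
  exists (fun => (1, 0)); split => /= [K||]; first by ring.
    by under eq_bigr do rewrite mulr1.
  by rewrite big1 // => K _; rewrite mulr0.
have total_gt0 : 0 < \sum_(K in P) r K by rewrite lt_def total_neq0 sumr_ge0.
have [S [K0 [SP K0P K0S S_half S_max]]] := greedy_half_split total_gt0.
set A := \sum_(K in S) r K in S_half S_max.
set C := \sum_(K in P | (K \notin S) && (K != K0)) r K.
have split_total := sum_split_subset_point r SP K0P K0S; rewrite -/A -/C in split_total.
have K0_bal : 2 * r K0 <= \sum_(K in P) r K.
  by move: (r_bal K0 K0P); rewrite (bigD1 K0) //= in split_total *; lra.
have [v1 [v2 [v3 [v1_unit v2_unit v3_unit sum1 sum2]]]] :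
    exists v1 v2 v3 : R * R,
    [/\ v1.1 ^+ 2 + v1.2 ^+ 2 = 1, v2.1 ^+ 2 + v2.2 ^+ 2 = 1,
        v3.1 ^+ 2 + v3.2 ^+ 2 = 1,
        A * v1.1 + r K0 * v2.1 + C * v3.1 = 0 &
        A * v1.2 + r K0 * v2.2 + C * v3.2 = 0].
  apply: triangle_closure; rewrite ?sumr_ge0 //; lra.
pose w K := if K \in S then v1 else if K == K0 then v2 else v3.
have sum_w (f : R * R -> R) :
    \sum_(K in P) r K * f (w K) = A * f v1 + r K0 * f v2 + C * f v3.
  rewrite (sum_split_subset_point _ SP K0P K0S) /w (negbTE K0S) eqxx.
  rewrite /A /C !mulr_suml; congr (_ + _ + _); apply: eq_bigr => K.
    by move=> ->.
  by case/andP=> _ /andP[/negbTE -> /negbTE ->].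
exists w; split; rewrite ?sum_w // => K.
by rewrite /w; case: ifP => _ //; case: ifP.
Qed.

End PolygonClosure.

Lemma sum_delta (R : pzSemiRingType) n (F : 'I_n -> R) i :
  \sum_j (i == j)%:R * F j = F i.
Proof.
rewrite (bigD1 i) //= eqxx mul1r big1 ?addr0 // => j ji.
by rewrite eq_sym (negbTE ji) mul0r.
Qed.

Lemma sum_mul_sqr (R : comPzSemiRingType) n (g : 'I_n -> R) :
  \sum_i \sum_j g i * g j = (\sum_i g i) ^+ 2.
Proof. by rewrite expr2 mulr_suml; apply: eq_bigr => i _; rewrite mulr_sumr. Qed.

Definition block_dir (R : realType) n (P : {set {set 'I_n}}) (u : 'rV[R]_n) i :=
  u 0 i / subnorm u (pblock P i).

(* [1 + D (W - B) D], with [D] the diagonal of [block_dir], [W] the Gram matrix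
   of the plane vectors [w K] and [B] the block-diagonal all-ones matrix. *)
Definition gram_witness (R : realType) n (P : {set {set 'I_n}}) (u : 'rV[R]_n)
    (w : {set 'I_n} -> R * R) : 'M[R]_n :=
  \matrix_(i, j) ((i == j)%:R +
    ((w (pblock P i)).1 * (w (pblock P j)).1 + (w (pblock P i)).2 * (w (pblock P j)).2
      - (pblock P i == pblock P j)%:R) * block_dir P u i * block_dir P u j).

Section GramWitness.
Variables (R : realType) (n : nat) (P : {set {set 'I_n}}) (u : 'rV[R]_n).
Variable w : {set 'I_n} -> R * R.
Hypothesis partP : partition P [set: 'I_n].
Hypothesis w_unit : forall K, (w K).1 ^+ 2 + (w K).2 ^+ 2 = 1.

Let e := block_dir P u.
Let Y := gram_witness P u w.

Lemma block_dir_dot K : K \in P -> \sum_(j in K) e j * u 0 j = subnorm u K.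
Proof.
move=> KP; have [K0|K_neq0] := eqVneq (subnorm u K) 0.
  by rewrite K0 big1 // => j jK; rewrite (subnorm_eq0 K0 jK) mulr0.
rewrite (eq_bigr (fun j => u 0 j ^+ 2 / subnorm u K)) => [|j jK]; last first.
  by rewrite /e /block_dir (pblock_of_mem partP KP jK) mulrAC expr2.
by rewrite -mulr_suml -subnorm_sqr expr2 mulfK.
Qed.

Lemma block_dir_cauchy_schwarz K (x : 'I_n -> R) : K \in P ->
  (\sum_(j in K) e j * x j) ^+ 2 <= \sum_(j in K) x j ^+ 2.
Proof.
move=> KP; have [K0|K_neq0] := eqVneq (subnorm u K) 0.
  rewrite big1 ?expr0n ?sumr_ge0 // => [j _|j jK]; first by rewrite sqr_ge0.
  by rewrite /e /block_dir (pblock_of_mem partP KP jK) K0 invr0 !mulr0 mul0r.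
set t := \sum_(j in K) e j * x j.
have e_unit : \sum_(j in K) e j ^+ 2 = 1.
  rewrite (eq_bigr (fun j => u 0 j ^+ 2 / subnorm u K ^+ 2)) => [|j jK]; last first.
    by rewrite /e /block_dir (pblock_of_mem partP KP jK) expr_div_n.
  by rewrite -mulr_suml -subnorm_sqr divff // expf_neq0.
have : 0 <= \sum_(j in K) (x j - t * e j) ^+ 2.
  by rewrite sumr_ge0 // => j _; rewrite sqr_ge0.
have -> : \sum_(j in K) (x j - t * e j) ^+ 2 =
    \sum_(j in K) x j ^+ 2 - 2 * t * t + t ^+ 2 * \sum_(j in K) e j ^+ 2.
  rewrite [2 * t * t]mulr_sumr [t ^+ 2 * _]mulr_sumr -sumrB -big_split /=.
  by apply: eq_bigr => j _; ring.
by rewrite e_unit; lra.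
Qed.

Lemma gram_witness_sym : Y^T = Y.
Proof.
by apply/matrixP => i j; rewrite !mxE eq_sym [pblock P j == _]eq_sym; ring.
Qed.

Lemma gram_witness_block I :
  I \in P -> forall i j, i \in I -> j \in I -> Y i j = (i == j)%:R.
Proof.
move=> IP i j iI jI; rewrite mxE (pblock_of_mem partP IP iI) (pblock_of_mem partP IP jI).
by rewrite eqxx -!expr2 w_unit subrr !mul0r addr0.
Qed.

Lemma gram_witness_form (x : 'I_n -> R) :
  \sum_i \sum_j x i * Y i j * x j =
  \sum_i x i ^+ 2 + (\sum_i (w (pblock P i)).1 * e i * x i) ^+ 2
  + (\sum_i (w (pblock P i)).2 * e i * x i) ^+ 2
  - \sum_(K in P) (\sum_(j in K) e j * x j) ^+ 2.
Proof.
pose g1 i := (w (pblock P i)).1 * e i * x i.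
pose g2 i := (w (pblock P i)).2 * e i * x i.
pose h i := e i * x i.
have -> : \sum_(K in P) (\sum_(j in K) h j) ^+ 2 =
    \sum_i \sum_j (pblock P i == pblock P j)%:R * (h i * h j).
  rewrite (sum_pblocks partP); apply: eq_bigr => K KP.
  rewrite expr2 mulr_suml; apply: eq_bigr => i iK.
  rewrite (sum_same_pblock partP _ (fun j => h i * h j)).
  by rewrite (pblock_of_mem partP KP iK) mulr_sumr.
have -> : \sum_i x i ^+ 2 = \sum_i \sum_j (i == j)%:R * (x i * x j).
  by apply: eq_bigr => i _; rewrite (sum_delta (fun j => x i * x j)) expr2.
rewrite -!sum_mul_sqr -!big_split -sumrB /=; apply: eq_bigr => i _.
rewrite -!big_split -sumrB /=; apply: eq_bigr => j _.
by rewrite /Y mxE /g1 /g2 /h /e; ring.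
Qed.

Lemma gram_witness_in_EP : in_EP P Y.
Proof.
split; last exact: gram_witness_block.
split=> [|x]; first exact: gram_witness_sym.
rewrite mxform_sum gram_witness_form.
have block_le : \sum_(K in P) (\sum_(j in K) e j * x j 0) ^+ 2 <= \sum_i x i 0 ^+ 2.
  by rewrite (sum_pblocks partP); apply: ler_sum => K KP; apply: block_dir_cauchy_schwarz.
have := sqr_ge0 (\sum_i (w (pblock P i)).1 * e i * x i 0).
have := sqr_ge0 (\sum_i (w (pblock P i)).2 * e i * x i 0).
lra.
Qed.

Lemma gram_witness_null :
  \sum_(K in P) subnorm u K * (w K).1 = 0 ->
  \sum_(K in P) subnorm u K * (w K).2 = 0 ->
  Y *m u^T = 0.
Proof.
move=> closed1 closed2; apply/matrixP => i k; rewrite ord1 !mxE.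
have closed (c : R * R -> R) : \sum_(K in P) subnorm u K * c (w K) = 0 ->
    \sum_j c (w (pblock P j)) * (e j * u 0 j) = 0.
  move=> closedc; rewrite (sum_pblocks partP) -[RHS]closedc.
  apply: eq_bigr => K KP; rewrite -(block_dir_dot KP) mulr_suml.
  by apply: eq_bigr => j jK; rewrite (pblock_of_mem partP KP jK) mulrC.
have own_block : \sum_j (pblock P i == pblock P j)%:R * (e j * u 0 j) =
    subnorm u (pblock P i).
  by rewrite sum_same_pblock // block_dir_dot // pblock_in_partition.
have -> : \sum_j Y i j * u^T j 0 =
    \sum_j (i == j)%:R * u 0 j
    + e i * (w (pblock P i)).1 * \sum_j (w (pblock P j)).1 * (e j * u 0 j)
    + e i * (w (pblock P i)).2 * \sum_j (w (pblock P j)).2 * (e j * u 0 j)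
    - e i * \sum_j (pblock P i == pblock P j)%:R * (e j * u 0 j).
  rewrite !mulr_sumr -!big_split -sumrB /=; apply: eq_bigr => j _.
  by rewrite /Y !mxE /e; ring.
rewrite sum_delta (closed (fun v => v.1)) // (closed (fun v => v.2)) // own_block.
rewrite !mulr0 !addr0 /e /block_dir.
have [K0|K_neq0] := eqVneq (subnorm u (pblock P i)) 0.
  by rewrite (subnorm_eq0 K0 (mem_pblock_self partP i)) K0 !mul0r subr0.
by rewrite mulfVK // subrr.
Qed.

End GramWitness.

Theorem corollary5p10 (R : realType) (n : nat) (P : {set {set 'I_n}}) :
  partition P [set: 'I_n] ->
  (forall (m : nat) (U : 'M[R]_(m, n)),
      realizable P U -> forall u : 'rV[R]_n, (u <= U)%MS -> balanced P u) /\
  (forall u : 'rV[R]_n, u != 0 -> (realizable P u <-> balanced P u)).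
Proof.
move=> partP; split.
  by move=> m U [Y [Y_EP UY0]] u uU; apply: null_in_EP_balanced Y_EP partP (UY0 u uU).
move=> u _; split.
  by move=> [Y [Y_EP uY0]]; apply: null_in_EP_balanced Y_EP partP (uY0 u (submx_refl u)).
move=> u_bal.
have [w [w_unit closed1 closed2]] :=
  polygon_closure (fun K => subnorm_ge0 u K) u_bal.
exists (gram_witness P u w); split; first exact: gram_witness_in_EP.
move=> v /sub_rVP[a ->].
by rewrite linearZ /= -scalemxAr gram_witness_null // scaler0.
Qed.
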